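(* Let $n\ge1$ and $y=(y_1,\dots,y_{2n})\in\mathbb Z^{2n}$ with $y_1<y_2<\dots<y_{2n}$. Then for every $\eta\in\{0,1\}^{\mathbb Z}$, \[ \mathcal L\,\Sigma_y(\eta)=\sum_{i=1}^{2n}L_{y_i}\Sigma_y(\eta), \] where $L_{y_i}$ denotes the operator $L$ acting on the variable $y_i$ of $y\mapsto\Sigma_y(\eta)$.
   Context: Fix $\theta\in[0,1]$ and uniformly bounded nonnegative rates $(p_x,q_x)_{x\in\mathbb Z}$. $\mathcal L$ is the generator acting on $F:\{0,1\}^{\mathbb Z}\to\mathbb R$ depending on finitely many coordinates by $\mathcal L F(\eta)=\sum_{x}q_x\big(\theta F(\eta^a_{x,x-1})+(1-\theta)F(\eta^c_{x,x-1})-F(\eta)\big)+\sum_x p_x\big(\theta F(\eta^a_{x-1,x})+(1-\theta)F(\eta^c_{x-1,x})-F(\eta)\big)$, where for $x\ne y$, $\eta^a_{x,y},\eta^c_{x,y}$ agree with $\eta$ off $\{x,y\}$, vanish at $x$, and $\eta^a_{x,y}(y)=(\eta(x)+\eta(y))\bmod2$, $\eta^c_{x,y}(y)=\min\{1,\eta(x)+\eta(y)\}$. The one-particle operator is $Lf(x)=q_xD^+f(x)+p_xD^-f(x)$ for $f:\mathbb Z\to\mathbb R$, where $D^+f(x)=f(x+1)-f(x)$, $D^-f(x)=f(x-1)-f(x)$. For $y\le z$, $\eta[y,z)=\sum_{y\le x<z}\eta(x)$ ($=0$ if $y=z$), $\sigma_{y,z}(\eta)=(-\theta)^{\eta[y,z)}$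 with $0^0=1$, and for $y_1\le\dots\le y_{2n}$, $\Sigma_y(\eta)=\prod_{i=1}^n\sigma_{y_{2i-1},y_{2i}}(\eta)$. *)

From Stdlib Require Import Reals ZArith Lia.
From Coquelicot Require Import Coquelicot.
Open Scope R_scope.

(* configurations eta in {0,1}^Z, encoded as Z -> bool (true = 1) *)
Definition config := Z -> bool.

Definition b2R (b : bool) : R := if b then 1 else 0.

(* eta^a_{x,y} : annihilating move of the particle at x onto y *)
Definition eta_a (eta : config) (x y : Z) : config :=
  fun z => if Z.eqb z x then false
           else if Z.eqb z y then xorb (eta x) (eta y)
           else eta z.

(* eta^c_{x,y} : coalescing move of the particle at x onto y *)
Definition eta_c (eta : config) (x y : Z) : config :=
  fun z => if Z.eqb z x then false
           else if Z.eqb z y then orb (eta x) (eta y)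
           else eta z.

Fixpoint sum_from (f : nat -> R) (a len : nat) : R :=
  match len with
  | O => 0
  | S k => f a + sum_from f (S a) k
  end.
Definition sumR (f : nat -> R) (a b : nat) : R := sum_from f a (S b - a).

Fixpoint prod_from (f : nat -> R) (a len : nat) : R :=
  match len with
  | O => 1
  | S k => f a * prod_from f (S a) k
  end.
Definition prodR (f : nat -> R) (a b : nat) : R := prod_from f a (S b - a).

Definition zpartial (g : Z -> R) (N : nat) : R :=
  sum_from (fun k => g (Z.of_nat k - Z.of_nat N)%Z) 0 (S (2 * N)).

Definition zsum (g : Z -> R) : R := real (Lim_seq (zpartial g)).

Definition gen (theta : R) (p q : Z -> R) (F : config -> R) (eta : config) : R :=
  zsum (fun x => q x * (theta * F (eta_a eta x (x - 1)%Z)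
                        + (1 - theta) * F (eta_c eta x (x - 1)%Z) - F eta))
  + zsum (fun x => p x * (theta * F (eta_a eta (x - 1)%Z x)
                        + (1 - theta) * F (eta_c eta (x - 1)%Z x) - F eta)).

Definition Lone (p q : Z -> R) (f : Z -> R) (x : Z) : R :=
  q x * (f (x + 1)%Z - f x) + p x * (f (x - 1)%Z - f x).

(* eta[y,z) = number of particles in [y,z) (0 if z <= y) *)
Definition occ (eta : config) (y z : Z) : nat :=
  List.fold_right (fun k acc => (Nat.b2n (eta (y + Z.of_nat k)%Z) + acc)%nat) 0%nat
    (List.seq 0 (Z.to_nat (z - y))).

(* sigma_{y,z}(eta) = (-theta)^{eta[y,z)}, with 0^0 = 1 (Stdlib pow) *)
Definition sigma (theta : R) (y z : Z) (eta : config) : R :=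
  pow (- theta) (occ eta y z).

(* Sigma_y(eta) = prod_{i=1}^n sigma_{y_{2i-1}, y_{2i}}(eta); y indexed 1..2n *)
Definition Sigma (theta : R) (n : nat) (y : nat -> Z) (eta : config) : R :=
  prodR (fun i => sigma theta (y (2 * i - 1)%nat) (y (2 * i)%nat) eta) 1 n.

Definition upd (y : nat -> Z) (i : nat) (v : Z) : nat -> Z :=
  fun j => if Nat.eqb j i then v else y j.

Definition L_on_var (theta : R) (p q : Z -> R) (n : nat) (y : nat -> Z) (i : nat)
  (eta : config) : R :=
  Lone p q (fun v => Sigma theta n (upd y i v) eta) (y i).

(* Sigma_y(eta) = (-theta)^m, where m counts the particles of eta in the union of the
   intervals [y_{2i-1}, y_{2i}), which are disjoint, so every site is covered at most once.
   A jump across the bond (x-1, x) changes eta only at x-1 and x, and for bits u, v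
   theta (-theta)^(u xor v) + (1 - theta) (-theta)^(u or v) = (-theta)^(u + v).
   Hence the theta-mixture of the annihilating and the coalescing move acts on Sigma_y as if
   both particles of the bond were simply counted at the target site.  This changes Sigma_y
   only when x is an endpoint y_j, and then it is exactly the effect of moving y_j one step
   against the jump; summing over bonds yields the terms of the L_{y_j}. *)

From Stdlib Require Import Reals ZArith Lia Lra List Classical FunctionalExtensionality.
From Coquelicot Require Import Coquelicot.
Open Scope R_scope.

Fixpoint nsum (f : nat -> nat) (a len : nat) : nat :=
  match len with
  | O => 0%nat
  | S k => (f a + nsum f (S a) k)%nat
  end.

Lemma nsum_ext f g a len :
  (forall k, (a <= k < a + len)%nat -> f k = g k) -> nsum f a len = nsum g a len.
Proof.
  revert a; induction len as [|len IH]; intros a H; simpl; [reflexivity|].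
  rewrite H, (IH (S a)); [reflexivity| |lia]. intros; apply H; lia.
Qed.

Lemma nsum_add f g a len :
  nsum (fun k => f k + g k)%nat a len = (nsum f a len + nsum g a len)%nat.
Proof. revert a; induction len as [|len IH]; intros a; simpl; [|rewrite IH]; lia. Qed.

Lemma nsum_mull c f a len : nsum (fun k => c * f k)%nat a len = (c * nsum f a len)%nat.
Proof. revert a; induction len as [|len IH]; intros a; simpl; [|rewrite IH]; lia. Qed.

Lemma nsum_zero f a len :
  (forall k, (a <= k < a + len)%nat -> f k = 0%nat) -> nsum f a len = 0%nat.
Proof.
  revert a; induction len as [|len IH]; intros a H; simpl; [reflexivity|].
  rewrite H, IH; [reflexivity| |lia]. intros; apply H; lia.
Qed.

Lemma nsum_single f a len i : (a <= i < a + len)%nat ->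
  (forall k, (a <= k < a + len)%nat -> k <> i -> f k = 0%nat) -> nsum f a len = f i.
Proof.
  revert a; induction len as [|len IH]; intros a Hi H; simpl; [lia|].
  destruct (Nat.eq_dec a i) as [->|Hai].
  - rewrite nsum_zero; [lia|]. intros; apply H; lia.
  - rewrite H, IH by (lia || (intros; apply H; lia)). reflexivity.
Qed.

Lemma nsum_replace f g a len i : (a <= i < a + len)%nat ->
  (forall k, (a <= k < a + len)%nat -> k <> i -> f k = g k) ->
  (nsum f a len + g i = nsum g a len + f i)%nat.
Proof.
  revert a; induction len as [|len IH]; intros a Hi H; simpl; [lia|].
  destruct (Nat.eq_dec a i) as [->|Hai].
  - rewrite (nsum_ext f g); [lia|]. intros; apply H; lia.
  - rewrite H by lia. specialize (IH (S a) ltac:(lia) ltac:(intros; apply H; lia)). lia.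
Qed.

Lemma sum_from_ext f g a len :
  (forall k, (a <= k < a + len)%nat -> f k = g k) -> sum_from f a len = sum_from g a len.
Proof.
  revert a; induction len as [|len IH]; intros a H; simpl; [reflexivity|].
  rewrite H, (IH (S a)); [reflexivity| |lia]. intros; apply H; lia.
Qed.

Lemma sum_from_plus f g a len :
  sum_from (fun k => f k + g k) a len = sum_from f a len + sum_from g a len.
Proof. revert a; induction len as [|len IH]; intros a; simpl; [|rewrite IH]; lra. Qed.

Lemma sum_from_zero f a len :
  (forall k, (a <= k < a + len)%nat -> f k = 0) -> sum_from f a len = 0.
Proof.
  revert a; induction len as [|len IH]; intros a H; simpl; [reflexivity|].
  rewrite H, IH; [lra| |lia]. intros; apply H; lia.
Qed.

Lemma sum_from_single f a len i : (a <= i < a + len)%nat ->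
  (forall k, (a <= k < a + len)%nat -> k <> i -> f k = 0) -> sum_from f a len = f i.
Proof.
  revert a; induction len as [|len IH]; intros a Hi H; simpl; [lia|].
  destruct (Nat.eq_dec a i) as [->|Hai].
  - rewrite sum_from_zero; [lra|]. intros; apply H; lia.
  - rewrite H, IH by (lia || (intros; apply H; lia)). lra.
Qed.

Lemma prod_from_pow r g a len : prod_from (fun i => r ^ g i) a len = r ^ nsum g a len.
Proof.
  revert a; induction len as [|len IH]; intros a; simpl; [|rewrite IH, pow_add]; reflexivity.
Qed.

Lemma occ_fold_shift (e : config) a s m :
  fold_right (fun k acc => (Nat.b2n (e (a + Z.of_nat k)%Z) + acc)%nat) 0%nat (seq (S s) m)
  = fold_right (fun k acc => (Nat.b2n (e (a + 1 + Z.of_nat k)%Z) + acc)%nat) 0%nat (seq s m).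
Proof.
  revert s; induction m as [|m IH]; intros s; [reflexivity|].
  cbn [seq fold_right]. rewrite IH.
  replace (a + Z.of_nat (S s))%Z with (a + 1 + Z.of_nat s)%Z by lia. reflexivity.
Qed.

Lemma occ_empty e a b : (b <= a)%Z -> occ e a b = 0%nat.
Proof. intros. unfold occ. replace (Z.to_nat (b - a)) with 0%nat by lia. reflexivity. Qed.

Lemma occ_cons e a b : (a < b)%Z -> occ e a b = (Nat.b2n (e a) + occ e (a + 1) b)%nat.
Proof.
  intros. unfold occ. replace (Z.to_nat (b - a)) with (S (Z.to_nat (b - (a + 1)))) by lia.
  cbn [seq fold_right]. rewrite occ_fold_shift, Z.add_0_r. reflexivity.
Qed.

Lemma occ_snoc e a b : (a <= b)%Z -> occ e a (b + 1) = (occ e a b + Nat.b2n (e b))%nat.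
Proof.
  intros Hab. remember (Z.to_nat (b - a)) as m eqn:Hm. revert a Hab Hm.
  induction m as [|m IH]; intros a Hab Hm.
  - assert (a = b) as -> by lia. rewrite occ_cons, !occ_empty by lia. lia.
  - rewrite (occ_cons e a (b + 1)), (occ_cons e a b), IH by lia. lia.
Qed.

Definition ind_Ico (c a b : Z) : nat := if (Z.leb a c && Z.ltb c b)%bool then 1%nat else 0%nat.

Lemma ind_Ico_in c a b : (a <= c < b)%Z -> ind_Ico c a b = 1%nat.
Proof. intros. unfold ind_Ico. destruct (Z.leb_spec a c), (Z.ltb_spec c b); simpl; lia. Qed.

Lemma ind_Ico_out c a b : ~ (a <= c < b)%Z -> ind_Ico c a b = 0%nat.
Proof. intros. unfold ind_Ico. destruct (Z.leb_spec a c), (Z.ltb_spec c b); simpl; lia. Qed.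

Lemma ind_Ico_cons c a b : (a < b)%Z ->
  ind_Ico c a b = ((if (c =? a)%Z then 1 else 0) + ind_Ico c (a + 1) b)%nat.
Proof.
  intros. unfold ind_Ico.
  destruct (Z.eqb_spec c a), (Z.leb_spec a c), (Z.ltb_spec c b), (Z.leb_spec (a + 1) c);
    simpl; lia.
Qed.

Lemma occ_bond e e0 x a b :
  (forall w, w <> x -> w <> (x - 1)%Z -> e w = e0 w) -> e0 x = false -> e0 (x - 1)%Z = false ->
  occ e a b = (occ e0 a b + Nat.b2n (e (x - 1)%Z) * ind_Ico (x - 1) a b
               + Nat.b2n (e x) * ind_Ico x a b)%nat.
Proof.
  intros Hoff Hx Hx1. remember (Z.to_nat (b - a)) as m eqn:Hm. revert a Hm.
  induction m as [|m IH]; intros a Hm.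
  - rewrite !occ_empty, !ind_Ico_out by lia. lia.
  - rewrite !(occ_cons _ a b), (IH (a + 1)%Z), !(ind_Ico_cons _ a b) by lia.
    destruct (Z.eqb_spec (x - 1) a) as [<-|Ha1]; [|destruct (Z.eqb_spec x a) as [<-|Ha]].
    + rewrite Z.eqb_sym, (proj2 (Z.eqb_neq _ _)), Hx1 by lia. simpl. lia.
    + rewrite Hx. simpl. lia.
    + rewrite Hoff by auto. lia.
Qed.

Definition mass (n : nat) (y : nat -> Z) (e : config) : nat :=
  nsum (fun i => occ e (y (2 * i - 1)%nat) (y (2 * i)%nat)) 1 n.

Definition cover (n : nat) (y : nat -> Z) (z : Z) : nat :=
  nsum (fun i => ind_Ico z (y (2 * i - 1)%nat) (y (2 * i)%nat)) 1 n.

Lemma Sigma_pow theta n y e : Sigma theta n y e = (- theta) ^ mass n y e.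
Proof.
  unfold Sigma, prodR, mass, sigma. replace (S n - 1)%nat with n by lia. apply prod_from_pow.
Qed.

Definition clear_bond (e : config) (x : Z) : config :=
  fun w => if (Z.eqb w x || Z.eqb w (x - 1))%bool then false else e w.

Lemma mass_bond n y e e' x : (forall w, w <> x -> w <> (x - 1)%Z -> e' w = e w) ->
  mass n y e' = (mass n y (clear_bond e x) + Nat.b2n (e' (x - 1)%Z) * cover n y (x - 1)
                 + Nat.b2n (e' x) * cover n y x)%nat.
Proof.
  intros Hoff. unfold mass, cover. rewrite <- !nsum_mull, <- !nsum_add.
  apply nsum_ext. intros k _. rewrite (occ_bond e' (clear_bond e x) x); [lia| | |];
    unfold clear_bond.
  - intros w Hx Hx1. rewrite (proj2 (Z.eqb_neq _ _) Hx), (proj2 (Z.eqb_neq _ _) Hx1). auto.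
  - rewrite Z.eqb_refl. reflexivity.
  - rewrite Z.eqb_refl, Bool.orb_true_r. reflexivity.
Qed.

Lemma cover_off_ends n y x : (forall j, (1 <= j <= 2 * n)%nat -> y j <> x) ->
  cover n y (x - 1) = cover n y x.
Proof.
  intros H. apply nsum_ext. intros k Hk. unfold ind_Ico.
  pose proof (H (2 * k - 1)%nat ltac:(lia)). pose proof (H (2 * k)%nat ltac:(lia)).
  destruct (Z.leb_spec (y (2 * k - 1)%nat) (x - 1)), (Z.ltb_spec (x - 1) (y (2 * k)%nat)),
    (Z.leb_spec (y (2 * k - 1)%nat) x), (Z.ltb_spec x (y (2 * k)%nat)); simpl; lia.
Qed.

Lemma mass_upd_left n y e i w : (1 <= i <= n)%nat ->
  (mass n (upd y (2 * i - 1) w) e + occ e (y (2 * i - 1)%nat) (y (2 * i)%nat)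
   = mass n y e + occ e w (y (2 * i)%nat))%nat.
Proof.
  intros Hi. unfold mass.
  replace (occ e w (y (2 * i)%nat))
    with (occ e (upd y (2 * i - 1) w (2 * i - 1)%nat) (upd y (2 * i - 1) w (2 * i)%nat))
    by (unfold upd; rewrite Nat.eqb_refl, (proj2 (Nat.eqb_neq _ _)) by lia; reflexivity).
  apply (nsum_replace
    (fun k => occ e (upd y (2 * i - 1) w (2 * k - 1)%nat) (upd y (2 * i - 1) w (2 * k)%nat))
    (fun k => occ e (y (2 * k - 1)%nat) (y (2 * k)%nat))); [lia|].
  intros k Hk Hki. unfold upd.
  rewrite !(proj2 (Nat.eqb_neq _ _)) by lia. reflexivity.
Qed.

Lemma mass_upd_right n y e i w : (1 <= i <= n)%nat ->
  (mass n (upd y (2 * i) w) e + occ e (y (2 * i - 1)%nat) (y (2 * i)%nat)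
   = mass n y e + occ e (y (2 * i - 1)%nat) w)%nat.
Proof.
  intros Hi. unfold mass.
  replace (occ e (y (2 * i - 1)%nat) w)
    with (occ e (upd y (2 * i) w (2 * i - 1)%nat) (upd y (2 * i) w (2 * i)%nat))
    by (unfold upd; rewrite Nat.eqb_refl, (proj2 (Nat.eqb_neq _ _)) by lia; reflexivity).
  apply (nsum_replace
    (fun k => occ e (upd y (2 * i) w (2 * k - 1)%nat) (upd y (2 * i) w (2 * k)%nat))
    (fun k => occ e (y (2 * k - 1)%nat) (y (2 * k)%nat))); [lia|].
  intros k Hk Hki. unfold upd.
  rewrite !(proj2 (Nat.eqb_neq _ _)) by lia. reflexivity.
Qed.

Lemma upd_same (y : nat -> Z) i : upd y i (y i) = y.
Proof.
  apply functional_extensionality. intros j. unfold upd.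
  destruct (Nat.eqb_spec j i) as [->|]; reflexivity.
Qed.

Lemma eta_a_src e u v : eta_a e u v u = false.
Proof. unfold eta_a. rewrite Z.eqb_refl. reflexivity. Qed.

Lemma eta_a_tgt e u v : u <> v -> eta_a e u v v = xorb (e u) (e v).
Proof. intros. unfold eta_a. rewrite Z.eqb_refl, (proj2 (Z.eqb_neq v u)); auto. Qed.

Lemma eta_a_off e u v w : w <> u -> w <> v -> eta_a e u v w = e w.
Proof. intros. unfold eta_a. rewrite !(proj2 (Z.eqb_neq _ _)); auto. Qed.

Lemma eta_c_src e u v : eta_c e u v u = false.
Proof. unfold eta_c. rewrite Z.eqb_refl. reflexivity. Qed.

Lemma eta_c_tgt e u v : u <> v -> eta_c e u v v = orb (e u) (e v).
Proof. intros. unfold eta_c. rewrite Z.eqb_refl, (proj2 (Z.eqb_neq v u)); auto. Qed.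

Lemma eta_c_off e u v w : w <> u -> w <> v -> eta_c e u v w = e w.
Proof. intros. unfold eta_c. rewrite !(proj2 (Z.eqb_neq _ _)); auto. Qed.

Lemma mix_pow theta (u v : bool) :
  theta * (- theta) ^ Nat.b2n (xorb u v) + (1 - theta) * (- theta) ^ Nat.b2n (orb u v)
  = (- theta) ^ (Nat.b2n u + Nat.b2n v).
Proof. destruct u, v; simpl; ring. Qed.

Lemma mix_pow_cover theta K c (u v : bool) : (c <= 1)%nat ->
  theta * (- theta) ^ (K + Nat.b2n (xorb u v) * c)
  + (1 - theta) * (- theta) ^ (K + Nat.b2n (orb u v) * c)
  = (- theta) ^ (K + c * (Nat.b2n u + Nat.b2n v)).
Proof.
  intros Hc. destruct c as [|[|c]]; [|rewrite !Nat.mul_1_r, !Nat.mul_1_l|lia].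
  - rewrite !Nat.mul_0_r, !Nat.add_0_r. ring.
  - rewrite !(pow_add _ K), <- mix_pow. ring.
Qed.

Section IncreasingEndpoints.

Variables (n : nat) (y : nat -> Z).
Hypothesis y_incr : forall i, (1 <= i)%nat -> (i < 2 * n)%nat -> (y i < y (S i))%Z.

Lemma y_lt i j : (1 <= i)%nat -> (i < j)%nat -> (j <= 2 * n)%nat -> (y i < y j)%Z.
Proof.
  intros Hi Hij Hj. induction j as [|j IH]; [lia|].
  destruct (Nat.eq_dec i j) as [->|]; [apply y_incr; lia|].
  specialize (IH ltac:(lia) ltac:(lia)). specialize (y_incr j ltac:(lia) ltac:(lia)). lia.
Qed.

Lemma y_inj i j : (1 <= i <= 2 * n)%nat -> (1 <= j <= 2 * n)%nat -> y i = y j -> i = j.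
Proof.
  intros Hi Hj Hy. destruct (Nat.lt_total i j) as [h|[h|h]]; [| exact h |].
  - pose proof (y_lt i j ltac:(lia) h ltac:(lia)). lia.
  - pose proof (y_lt j i ltac:(lia) h ltac:(lia)). lia.
Qed.

Lemma y_le i j : (1 <= i)%nat -> (i <= j)%nat -> (j <= 2 * n)%nat -> (y i <= y j)%Z.
Proof.
  intros. destruct (Nat.eq_dec i j) as [->|]; [lia|]. pose proof (y_lt i j). lia.
Qed.

Lemma intervals_disjoint z i k : (1 <= i <= n)%nat -> (1 <= k <= n)%nat ->
  (y (2 * i - 1)%nat <= z < y (2 * i)%nat)%Z -> (y (2 * k - 1)%nat <= z < y (2 * k)%nat)%Z ->
  i = k.
Proof.
  intros Hi Hk Hzi Hzk. destruct (Nat.lt_total i k) as [h|[h|h]]; [| exact h |].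
  - pose proof (y_le (2 * i) (2 * k - 1) ltac:(lia) ltac:(lia) ltac:(lia)). lia.
  - pose proof (y_le (2 * k) (2 * i - 1) ltac:(lia) ltac:(lia) ltac:(lia)). lia.
Qed.

Lemma cover_in z i : (1 <= i <= n)%nat ->
  (y (2 * i - 1)%nat <= z < y (2 * i)%nat)%Z -> cover n y z = 1%nat.
Proof.
  intros Hi Hz. unfold cover. rewrite (nsum_single _ 1 n i); [apply ind_Ico_in; auto|lia|].
  intros k Hk Hki. apply ind_Ico_out. intros Hzk.
  apply Hki, (intervals_disjoint z); auto; lia.
Qed.

Lemma cover_out z : (forall k, (1 <= k <= n)%nat -> ~ (y (2 * k - 1)%nat <= z < y (2 * k)%nat)%Z) ->
  cover n y z = 0%nat.
Proof. intros H. apply nsum_zero. intros k Hk. apply ind_Ico_out, H. lia. Qed.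

Lemma cover_le1 z : (cover n y z <= 1)%nat.
Proof.
  destruct (classic (exists i, (1 <= i <= n)%nat /\ (y (2 * i - 1)%nat <= z < y (2 * i)%nat)%Z))
    as [[i [Hi Hz]]|Hnone].
  - rewrite (cover_in z i); auto.
  - rewrite cover_out; [lia|]. intros k Hk Hz. apply Hnone. exists k. auto.
Qed.

Lemma cover_left_end i : (1 <= i <= n)%nat ->
  cover n y (y (2 * i - 1)%nat - 1) = 0%nat /\ cover n y (y (2 * i - 1)%nat) = 1%nat.
Proof.
  intros Hi. pose proof (y_lt (2 * i - 1) (2 * i) ltac:(lia) ltac:(lia) ltac:(lia)). split.
  - apply cover_out. intros k Hk Hz. destruct (Nat.lt_ge_cases k i).
    + pose proof (y_lt (2 * k) (2 * i - 1) ltac:(lia) ltac:(lia) ltac:(lia)). lia.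
    + pose proof (y_le (2 * i - 1) (2 * k - 1) ltac:(lia) ltac:(lia) ltac:(lia)). lia.
  - apply (cover_in _ i); lia.
Qed.

Lemma cover_right_end i : (1 <= i <= n)%nat ->
  cover n y (y (2 * i)%nat - 1) = 1%nat /\ cover n y (y (2 * i)%nat) = 0%nat.
Proof.
  intros Hi. pose proof (y_lt (2 * i - 1) (2 * i) ltac:(lia) ltac:(lia) ltac:(lia)). split.
  - apply (cover_in _ i); lia.
  - apply cover_out. intros k Hk Hz. destruct (Nat.lt_ge_cases i k).
    + pose proof (y_lt (2 * i) (2 * k - 1) ltac:(lia) ltac:(lia) ltac:(lia)). lia.
    + pose proof (y_le (2 * k) (2 * i) ltac:(lia) ltac:(lia) ltac:(lia)). lia.
Qed.

Lemma mass_upd_succ e j : (1 <= j <= 2 * n)%nat ->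
  mass n (upd y j (y j + 1)) e
  = (mass n y (clear_bond e (y j))
     + cover n y (y j - 1) * (Nat.b2n (e (y j - 1)%Z) + Nat.b2n (e (y j))))%nat.
Proof.
  intros Hj. pose proof (mass_bond n y e e (y j) (fun _ _ _ => eq_refl)) as Hmass.
  destruct (Nat.Even_or_Odd j) as [[i ->]|[i ->]].
  - destruct (cover_right_end i ltac:(lia)) as [C1 C0]. rewrite C1, C0 in *.
    pose proof (mass_upd_right n y e i (y (2 * i)%nat + 1) ltac:(lia)) as Hupd.
    rewrite occ_snoc in Hupd by (apply y_le; lia). lia.
  - replace (2 * i + 1)%nat with (2 * S i - 1)%nat in * by lia.
    destruct (cover_left_end (S i) ltac:(lia)) as [C0 C1]. rewrite C1, C0 in *.
    pose proof (mass_upd_left n y e (S i) (y (2 * S i - 1)%nat + 1) ltac:(lia)) as Hupd.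
    rewrite (occ_cons _ (y (2 * S i - 1)%nat)) in Hupd by (apply y_lt; lia). lia.
Qed.

Lemma mass_upd_pred e j : (1 <= j <= 2 * n)%nat ->
  mass n (upd y j (y j - 1)) e
  = (mass n y (clear_bond e (y j))
     + cover n y (y j) * (Nat.b2n (e (y j - 1)%Z) + Nat.b2n (e (y j))))%nat.
Proof.
  intros Hj. pose proof (mass_bond n y e e (y j) (fun _ _ _ => eq_refl)) as Hmass.
  destruct (Nat.Even_or_Odd j) as [[i ->]|[i ->]].
  - destruct (cover_right_end i ltac:(lia)) as [C1 C0]. rewrite C1, C0 in *.
    pose proof (mass_upd_right n y e i (y (2 * i)%nat - 1) ltac:(lia)) as Hupd.
    pose proof (y_lt (2 * i - 1) (2 * i) ltac:(lia) ltac:(lia) ltac:(lia)).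
    pose proof (occ_snoc e (y (2 * i - 1)%nat) (y (2 * i)%nat - 1) ltac:(lia)) as Hsnoc.
    rewrite Z.sub_add in Hsnoc. lia.
  - replace (2 * i + 1)%nat with (2 * S i - 1)%nat in * by lia.
    destruct (cover_left_end (S i) ltac:(lia)) as [C0 C1]. rewrite C1, C0 in *.
    pose proof (mass_upd_left n y e (S i) (y (2 * S i - 1)%nat - 1) ltac:(lia)) as Hupd.
    rewrite (occ_cons _ (y (2 * S i - 1)%nat - 1)), Z.sub_add in Hupd
      by (pose proof (y_lt (2 * S i - 1) (2 * S i)); lia). lia.
Qed.

Lemma Sigma_jump_left theta e x :
  theta * Sigma theta n y (eta_a e x (x - 1)%Z)
  + (1 - theta) * Sigma theta n y (eta_c e x (x - 1)%Z)
  = (- theta) ^ (mass n y (clear_bond e x)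
                 + cover n y (x - 1) * (Nat.b2n (e (x - 1)%Z) + Nat.b2n (e x))).
Proof.
  rewrite !Sigma_pow, (mass_bond n y e (eta_a e x (x - 1)) x),
    (mass_bond n y e (eta_c e x (x - 1)) x)
    by (intros; apply eta_a_off || apply eta_c_off; auto).
  rewrite eta_a_src, eta_c_src, eta_a_tgt, eta_c_tgt, !Nat.add_0_r by lia.
  rewrite mix_pow_cover by apply cover_le1. f_equal. lia.
Qed.

Lemma Sigma_jump_right theta e x :
  theta * Sigma theta n y (eta_a e (x - 1)%Z x)
  + (1 - theta) * Sigma theta n y (eta_c e (x - 1)%Z x)
  = (- theta) ^ (mass n y (clear_bond e x)
                 + cover n y x * (Nat.b2n (e (x - 1)%Z) + Nat.b2n (e x))).
Proof.
  rewrite !Sigma_pow, (mass_bond n y e (eta_a e (x - 1) x) x),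
    (mass_bond n y e (eta_c e (x - 1) x) x)
    by (intros; apply eta_a_off || apply eta_c_off; auto).
  rewrite eta_a_src, eta_c_src, eta_a_tgt, eta_c_tgt by lia.
  simpl (Nat.b2n false). rewrite Nat.mul_0_l, Nat.add_0_r.
  rewrite mix_pow_cover by apply cover_le1. reflexivity.
Qed.

Lemma bond_sum (rate : Z -> R) (F : nat -> R) (M S : R) x :
  (forall j, (1 <= j <= 2 * n)%nat -> y j = x -> F j = M) ->
  ((forall j, (1 <= j <= 2 * n)%nat -> y j <> x) -> M = S) ->
  rate x * (M - S)
  = sum_from (fun j => if (y j =? x)%Z then rate (y j) * (F j - S) else 0) 1 (2 * n).
Proof.
  intros Hhit Hmiss.
  destruct (classic (exists j, (1 <= j <= 2 * n)%nat /\ y j = x)) as [[j [Hj Hx]]|Hnone].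
  - rewrite (sum_from_single _ 1 (2 * n) j); [|lia|].
    + rewrite Hx, Z.eqb_refl, Hhit; auto.
    + intros k Hk Hkj. destruct (Z.eqb_spec (y k) x); [|reflexivity].
      exfalso. apply Hkj, y_inj; lia.
  - rewrite sum_from_zero, Hmiss; [ring| |].
    + intros j Hj Hx. apply Hnone. eauto.
    + intros k Hk. destruct (Z.eqb_spec (y k) x); [|reflexivity].
      exfalso. apply Hnone. exists k. split; [lia|assumption].
Qed.

Lemma bond_left theta (q : Z -> R) e x :
  q x * (theta * Sigma theta n y (eta_a e x (x - 1)%Z)
         + (1 - theta) * Sigma theta n y (eta_c e x (x - 1)%Z) - Sigma theta n y e)
  = sum_from (fun j => if (y j =? x)%Z then
       q (y j) * (Sigma theta n (upd y j (y j + 1)%Z) e - Sigma theta n y e) else 0) 1 (2 * n).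
Proof.
  rewrite Sigma_jump_left. apply bond_sum.
  - intros j Hj <-. rewrite Sigma_pow, mass_upd_succ; auto.
  - intros Hmiss. rewrite Sigma_pow, (mass_bond n y e e x), cover_off_ends by auto.
    f_equal. lia.
Qed.

Lemma bond_right theta (p : Z -> R) e x :
  p x * (theta * Sigma theta n y (eta_a e (x - 1)%Z x)
         + (1 - theta) * Sigma theta n y (eta_c e (x - 1)%Z x) - Sigma theta n y e)
  = sum_from (fun j => if (y j =? x)%Z then
       p (y j) * (Sigma theta n (upd y j (y j - 1)%Z) e - Sigma theta n y e) else 0) 1 (2 * n).
Proof.
  rewrite Sigma_jump_right. apply bond_sum.
  - intros j Hj <-. rewrite Sigma_pow, mass_upd_pred; auto.
  - intros Hmiss. rewrite Sigma_pow, (mass_bond n y e e x), cover_off_ends by auto.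
    f_equal. lia.
Qed.

End IncreasingEndpoints.

Lemma zpartial_plus f g N : zpartial (fun x => f x + g x) N = zpartial f N + zpartial g N.
Proof. apply sum_from_plus. Qed.

Lemma is_lim_zpartial_point (c : Z) (v : R) :
  is_lim_seq (zpartial (fun x => if (c =? x)%Z then v else 0)) v.
Proof.
  apply is_lim_seq_ext_loc with (u := fun _ => v); [|apply is_lim_seq_const].
  exists (Z.to_nat (Z.abs c)). intros N HN. unfold zpartial.
  rewrite (sum_from_single _ 0 (S (2 * N)) (Z.to_nat (c + Z.of_nat N))); [|lia|].
  - rewrite Z2Nat.id, Z.add_simpl_r, Z.eqb_refl by lia. reflexivity.
  - intros k Hk Hkc. destruct (Z.eqb_spec c (Z.of_nat k - Z.of_nat N)); [lia|reflexivity].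
Qed.

Lemma zsum_points (y : nat -> Z) (c : nat -> R) a len :
  zsum (fun x => sum_from (fun j => if (y j =? x)%Z then c j else 0) a len) = sum_from c a len.
Proof.
  unfold zsum. replace (sum_from c a len) with (real (Finite (sum_from c a len))) by reflexivity.
  f_equal. apply is_lim_seq_unique. revert a. induction len as [|len IH]; intros a; simpl.
  - apply is_lim_seq_ext with (u := fun _ => 0); [|apply is_lim_seq_const].
    intros N. symmetry. apply sum_from_zero. reflexivity.
  - eapply is_lim_seq_ext; [intros N; symmetry; apply zpartial_plus|].
    apply is_lim_seq_plus'; [apply is_lim_zpartial_point|apply IH].
Qed.

Theorem lemma1 (theta : R) (p q : Z -> R) (n : nat) (y : nat -> Z) :
  0 <= theta <= 1 ->
  (forall x, 0 <= p x) -> (forall x, 0 <= q x) ->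
  (exists M, forall x, p x <= M /\ q x <= M) ->
  (1 <= n)%nat ->
  (forall i, (1 <= i)%nat -> (i < 2 * n)%nat -> (y i < y (S i))%Z) ->
  forall eta : config,
    gen theta p q (Sigma theta n y) eta
    = sumR (fun i => L_on_var theta p q n y i eta) 1 (2 * n).
Proof.
  intros _ _ _ _ _ y_incr eta. unfold gen.
  rewrite (functional_extensionality _ _ (bond_left n y y_incr theta q eta)),
    (functional_extensionality _ _ (bond_right n y y_incr theta p eta)),
    !zsum_points, <- sum_from_plus.
  unfold sumR. replace (S (2 * n) - 1)%nat with (2 * n)%nat by lia.
  apply sum_from_ext. intros k _. unfold L_on_var, Lone. rewrite upd_same. ring.
Qed.
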